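(* For every integer $N\ge1$, $$\phi_N(y,z)=\{(q-1)z\}^{-N(N+1)/2}q^{-(N-1)N(N+1)/6}\det\Big(p_{2(N+1-i)}\big(y,q^{N+1-j}z\big)\Big)_{i,j=1}^{N+1},$$ i.e. the $(N+1)\times(N+1)$ determinant has first row $p_{2N}(y,q^Nz),p_{2N}(y,q^{N-1}z),\dots,p_{2N}(y,z)$ and last row $p_0(y,q^Nz),\dots,p_0(y,z)$.
   Context: $q$ is a fixed nonzero complex constant that is not a root of unity; $y,z$ are variables. For $k\in\mathbb{Z}$ the polynomials $p_k(y,z)$ are defined by the generating function $\sum_{n\ge 0}p_n(y,z)t^n=\frac{(-(1-q)t;q)_\infty}{((1-q)yt;q)_\infty((1-q)zt;q)_\infty}$, with $(a;q)_\infty=\prod_{i\ge0}(1-aq^i)$, and $p_k=0$ for $k<0$; equivalently $p_n(y,z)=(1-q)^n\sum_{a+b+c=n}\frac{y^a z^b q^{c(c-1)/2}}{(q;q)_a(q;q)_b(q;q)_c}$ with $(q;q)_m=\prod_{j=1}^m(1-q^j)$. For $N>0$, $\phi_N(y,z)=\det\big(p_{N-2i+j+1}(y,z)\big)_{i,j=1}^N$. *)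

From HB Require Import structures.
From mathcomp Require Import all_boot all_order all_algebra.
From mathcomp Require Import complex Rstruct.

Set Implicit Arguments. Unset Strict Implicit. Unset Printing Implicit Defensive.
Import Order.TTheory GRing.Theory Num.Theory.
Local Open Scope ring_scope.

Definition C : Type := (complex Rdefinitions.R).

Definition qpoch (q : C) (m : nat) : C := \prod_(1 <= j < m.+1) (1 - q ^+ j).

Definition qp_nat (q : C) (n : nat) (y z : C) : C :=
  (1 - q) ^+ n *
  \sum_(a < n.+1) \sum_(b < n.+1 | ((a : nat) + (b : nat) <= n)%N)
     (y ^+ a * z ^+ b * q ^+ 'C(n - a - b, 2)
       / (qpoch q a * qpoch q b * qpoch q (n - a - b))).

Definition p (q : C) (k : int) (y z : C) : C :=
  match k with
  | Posz n => qp_nat q n y z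
  | Negz _ => 0
  end.

(* phi_N(y,z) = det (p_{N-2i+j+1}(y,z))_{i,j=1}^N ; with 0-based i,j : 'I_N
   the index is N - 2(i+1) + (j+1) + 1 = N - 2i + j. *)
Definition phi (q : C) (N : nat) (y z : C) : C :=
  \det (\matrix_(i < N, j < N) p q (N%:Z - 2 * (i : nat)%:Z + (j : nat)%:Z) y z).

Definition not_root_of_unity (q : C) : Prop := forall n : nat, (0 < n)%N -> q ^+ n != 1.

(* Each factor 1/((1-q)wt;q)_oo of the generating function satisfies the
   q-difference equation F(qw) = F(w) + (q-1)wt F(w), hence so does the whole
   generating function, its other factors being independent of w:
   p_n(y,qw) = p_n(y,w) + (q-1) w p_{n-1}(y,w).  Iterating, if u_{m,k} are the
   coefficients of prod_{i<m} (X - q^i), then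
   sum_k u_{m,k} p_n(y, q^k w) = ((q-1)w)^m q^C(m,2) p_{n-m}(y,w).
   These are unitriangular column operations on the (N+1) x (N+1) matrix; they
   turn its entries into ((q-1)z)^(N-j) q^C(N-j,2) p_{2(N-i)-(N-j)}(y,z).  The
   last row becomes (0,...,0,1) and the remaining minor is phi_N(y,z) with
   scaled columns. *)

From HB Require Import structures.
From mathcomp Require Import all_boot all_order all_algebra.
From mathcomp Require Import complex Rstruct.
From mathcomp Require Import ring zify.
Import Order.TTheory GRing.Theory Num.Theory.
Local Open Scope ring_scope.

Lemma sum_ord_subn (f : nat -> nat) N : (\sum_(j < N) f (N - j) = \sum_(j < N) f j.+1)%N.
Proof.
rewrite (reindex_inj rev_ord_inj) /=; apply: eq_bigr => j _.
by congr f; have := ltn_ord j; lia.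
Qed.

Lemma triangular_sum_subn N : (\sum_(j < N) (N - j) = N * N.+1 %/ 2)%N.
Proof.
rewrite (sum_ord_subn id).
suff -> : (N * N.+1 = (\sum_(j < N) j.+1) * 2)%N by rewrite mulnK.
elim: N => [|N IH]; first by rewrite big_ord0.
by rewrite big_ord_recr /= mulnDl -IH; lia.
Qed.

Lemma tetrahedral_sum_subn N : (\sum_(j < N) 'C(N - j, 2) = (N - 1) * N * N.+1 %/ 6)%N.
Proof.
rewrite (sum_ord_subn (binomial^~ 2)).
suff -> : ((N - 1) * N * N.+1 = (\sum_(j < N) 'C(j.+1, 2)) * 6)%N by rewrite mulnK.
elim: N => [|N IH]; first by rewrite big_ord0.
rewrite big_ord_recr /= mulnDl -IH binS bin1.
have := mul_bin_diag N 1.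
case: N {IH} => [|N] /=; rewrite ?bin1; lia.
Qed.

Section QDifference.
Context {R : comPzRingType} (q : R).

(* The q-derivative (e (k+1) (q w) - e (k+1) w) / ((q - 1) w) is e k w, as for
   the divided powers w^k / [k]_q!. *)
Definition q_appell (e : nat -> R -> R) : Prop :=
  (forall w, e 0%N (q * w) = e 0%N w) /\
  (forall k w, e k.+1 (q * w) = e k.+1 w + (q - 1) * w * e k w).

Definition conv (c : nat -> R) (e : nat -> R -> R) (m : nat) (w : R) : R :=
  \sum_(a < m.+1) c a * e (m - a)%N w.

Lemma q_appell_conv c {e} : q_appell e -> q_appell (conv c e).
Proof.
move=> [e0 eS]; split=> [w|m w]; first by rewrite /conv !big_ord1 e0.
rewrite /conv big_ord_recr [in X in _ = X + _]big_ord_recr /= subnn e0 addrAC.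
congr (_ + _); rewrite big_distrr -big_split /=; apply: eq_bigr => a _.
have -> : (m.+1 - a = (m - a).+1)%N by have := ltn_ord a; lia.
by rewrite eS; ring.
Qed.

(* [qdiff_coef m k] is the coefficient of X^k in prod_(i < m) (X - q^i). *)
Fixpoint qdiff_coef (m k : nat) : R :=
  match m with
  | 0 => (k == 0%N)%:R
  | m'.+1 => (if k is k'.+1 then qdiff_coef m' k' else 0) - q ^+ m' * qdiff_coef m' k
  end.

Lemma qdiff_coef_gt m k : (m < k)%N -> qdiff_coef m k = 0.
Proof.
elim: m k => [|m IH] [|k] //= ltmk.
by rewrite !IH ?mulr0 ?subr0 //; lia.
Qed.

Lemma qdiff_coef_diag m : qdiff_coef m m = 1.
Proof. by elim: m => [|m IH] //=; rewrite IH qdiff_coef_gt // mulr0 subr0. Qed.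

Context {f : int -> R -> R}.
Hypothesis f_qshift : forall n w, f n (q * w) = f n w + (q - 1) * w * f (n - 1) w.

Lemma sum_qdiff_coef n m K w : (m <= K)%N ->
  \sum_(k < K.+1) qdiff_coef m k * f n (q ^+ k * w) =
  ((q - 1) * w) ^+ m * q ^+ 'C(m, 2) * f (n - m%:Z) w.
Proof.
elim: m K w => [|m IH] K w leK.
  rewrite big_ord_recl big1 => [|k _]; last by rewrite lift0 /= mul0r.
  by rewrite /= addr0 expr0 !mul1r subr0.
case: K leK => [|K] //= leK.
under eq_bigr => k _ do rewrite mulrBl -mulrA.
rewrite sumrB -big_distrr /= IH 1?ltnW // big_ord_recl mul0r add0r.
under eq_bigr => k _ do rewrite lift0 /= exprSr -mulrA.
rewrite IH // f_qshift.
have -> : (n - m.+1%:Z = n - m%:Z - 1)%R by lia.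
rewrite binS bin1 exprD !exprMn !exprS; ring.
Qed.

Lemma det_qshift_cols N (n : 'I_N.+1 -> int) w :
  \det (\matrix_(i < N.+1, j < N.+1) f (n i) (q ^+ (N - j) * w)) =
  \det (\matrix_(i < N.+1, j < N.+1)
          (((q - 1) * w) ^+ (N - j) * q ^+ 'C(N - j, 2) * f (n i - (N - j)%N%:Z) w)).
Proof.
pose U := \matrix_(a < N.+1, j < N.+1) qdiff_coef (N - j) (N - a).
have detU : \det U = 1.
  rewrite det_trig; last first.
    by apply/is_trig_mxP => a j ltaj; rewrite mxE qdiff_coef_gt //; have := ltn_ord j; lia.
  by apply: big1 => a _; rewrite mxE qdiff_coef_diag.
set S := (X in \det X = _); set T := (X in _ = \det X).
suff -> : T = S *m U by rewrite det_mulmx detU mulr1.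
apply/matrixP => i j; rewrite !mxE (reindex_inj rev_ord_inj) /=.
rewrite -(sum_qdiff_coef _ _ N); last by have := ltn_ord j; lia.
apply: eq_bigr => k _; rewrite !mxE /= subSS subKn 1?mulrC //; have := ltn_ord k; lia.
Qed.

End QDifference.

Lemma det_last_row_unit (R : comPzRingType) n (A : 'M[R]_n.+1) :
  (forall j : 'I_n, A ord_max (widen_ord (leqnSn n) j) = 0) ->
  \det A = A ord_max ord_max * \det (row' ord_max (col' ord_max A)).
Proof.
move=> A0; rewrite (expand_det_row _ ord_max) big_ord_recr /= big1 ?add0r.
  by rewrite /cofactor -signr_odd addnn odd_double mul1r.
by move=> j _; rewrite A0 mul0r.
Qed.

Lemma det_scale_cols (R : comPzRingType) n (c : 'I_n -> R) (A : 'M[R]_n) :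
  \det (\matrix_(i, j) (c j * A i j)) = \det A * \prod_j c j.
Proof.
have -> : \prod_j c j = \det (diag_mx (\row_j c j)).
  by rewrite det_diag; apply: eq_bigr => j _; rewrite mxE.
rewrite -det_mulmx; congr (\det _).
by apply/matrixP => i j; rewrite mul_mx_diag !mxE mulrC.
Qed.

Lemma p_lt0 q k y w : k < 0 -> p q k y w = 0.
Proof. by case: k. Qed.

Section QPolynomials.
Variable q : C.
Hypothesis hq : not_root_of_unity q.

Lemma qpochS k : qpoch q k.+1 = qpoch q k * (1 - q ^+ k.+1).
Proof. by rewrite /qpoch big_nat_recr. Qed.

Lemma qpoch_neq0 k : qpoch q k != 0.
Proof.
rewrite /qpoch prodf_seq_neq0; apply/allP => j; rewrite mem_index_iota => /andP [j_gt0 _].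
by rewrite subr_eq0 eq_sym hq.
Qed.

Lemma qp_nat0 y w : qp_nat q 0 y w = 1.
Proof.
rewrite /qp_nat big_ord1 big_mkcond big_ord1 /= /qpoch big_geq //.
by rewrite !expr0 !mul1r invr1.
Qed.

(* Taylor coefficients of 1/((1-q)wt;q)_oo and of (-(1-q)t;q)_oo, the three
   factors of the generating function of [p]. *)
Definition qexp_coef (w : C) (k : nat) : C := (1 - q) ^+ k * w ^+ k / qpoch q k.
Definition qExp_coef (c : nat) : C := (1 - q) ^+ c * q ^+ 'C(c, 2) / qpoch q c.

Lemma qexp_coef0 w : qexp_coef w 0 = 1.
Proof. by rewrite /qexp_coef /qpoch big_geq // !expr0 mulr1 invr1 mulr1. Qed.

Lemma q_appell_qexp_coef : q_appell q (fun k w => qexp_coef w k).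
Proof.
split=> [w|k w]; first by rewrite !qexp_coef0.
have qk_neq1 : 1 - q ^+ k.+1 != 0 by rewrite subr_eq0 eq_sym hq.
have := qpoch_neq0 k; move: qk_neq1.
rewrite /qexp_coef qpochS exprMn; set P := qpoch q k; set Q := q ^+ k.+1.
rewrite !exprS => Q_neq1 P_neq0.
by field; apply/andP.
Qed.

Lemma qp_nat_conv n y w :
  qp_nat q n y w = conv (qexp_coef y) (conv qExp_coef (fun k w => qexp_coef w k)) n w.
Proof.
rewrite /qp_nat /conv big_distrr; apply: eq_bigr => a _ /=.
have lean := ltn_ord a; rewrite ltnS in lean.
rewrite [in RHS](reindex_inj rev_ord_inj) !big_distrr /=.
rewrite (big_ord_widen n.+1 (fun b => qexp_coef y a *
  (qExp_coef ((n - a).+1 - b.+1) * qexp_coef w (n - a - ((n - a).+1 - b.+1))))); last by lia.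
apply: eq_big => [b | b le_abn]; first by apply/idP/idP; lia.
have -> : ((n - a).+1 - b.+1 = n - a - b)%N by lia.
have -> : (n - a - (n - a - b) = b)%N by lia.
have -> : (1 - q) ^+ n = (1 - q) ^+ a * (1 - q) ^+ b * (1 - q) ^+ (n - a - b).
  by rewrite -!exprD; congr (_ ^+ _); lia.
by rewrite /qexp_coef /qExp_coef !invfM; ring.
Qed.

Lemma q_appell_qp_nat y : q_appell q (fun n w => qp_nat q n y w).
Proof.
have [e0 eS] := q_appell_conv q (qexp_coef y) (q_appell_conv q qExp_coef q_appell_qexp_coef).
by split=> [w|k w]; rewrite !qp_nat_conv ?e0 ?eS.
Qed.

Lemma p_qshift y (k : int) w : p q k y (q * w) = p q k y w + (q - 1) * w * p q (k - 1) y w.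
Proof.
have [e0 eS] := q_appell_qp_nat y.
case: k => [[|n]|n] /=.
- by rewrite mulr0 addr0 e0.
- by rewrite subn1 eS.
- by rewrite mulr0 addr0.
Qed.

End QPolynomials.

Theorem lemma5 (q : C) (hq0 : q != 0) (hq : not_root_of_unity q)
  (N : nat) (hN : (1 <= N)%N) (y z : C) (hz : z != 0) :
  phi q N y z =
    ((q - 1) * z) ^- (N * N.+1 %/ 2) * q ^- ((N - 1) * N * N.+1 %/ 6) *
    \det (\matrix_(i < N.+1, j < N.+1)
            qp_nat q (2 * (N - i)) y (q ^+ (N - j) * z)).
Proof.
rewrite (det_qshift_cols q (p_qshift q hq y) _ (fun i : 'I_N.+1 => (2 * (N - i))%N%:Z)).
rewrite det_last_row_unit => [|j]; last first.
  by rewrite mxE subnn muln0 p_lt0 ?mulr0 // sub0r oppr_lt0 ltz_nat subn_gt0 /=.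
rewrite mxE subnn muln0 /= qp_nat0 !mul1r.
pose cc (j : 'I_N) := ((q - 1) * z) ^+ (N - j) * q ^+ 'C(N - j, 2).
set M := row' _ _.
pose Phi := \matrix_(i < N, j < N) p q (N%:Z - 2 * (i : nat)%:Z + (j : nat)%:Z) y z.
have -> : M = \matrix_(i, j) (cc j * Phi i j).
  apply/matrixP => i j; rewrite !mxE !lift_max; congr (_ * p q _ y z).
  move: i => /= i.
  by have := ltn_ord i; have := ltn_ord j; lia.
rewrite det_scale_cols -/(phi q N y z).
have -> : \prod_j cc j = ((q - 1) * z) ^+ (N * N.+1 %/ 2) * q ^+ ((N - 1) * N * N.+1 %/ 6).
  by rewrite big_split /= !prodrXr triangular_sum_subn tetrahedral_sum_subn.
have q1_neq0 : q - 1 != 0 by rewrite subr_eq0; exact: (hq 1%N).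
by rewrite mulrCA -invfM mulVf ?mulr1 // mulf_neq0 ?expf_neq0 ?mulf_neq0.
Qed.
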